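(* Let $T$ be a continuous linear operator on a topological vector space $X$ and let $\mathcal F$ be a Furstenberg family. If $T$ is hypercyclic and has the $\mathscr P_{\mathcal F}$ property, then $T$ is $b\mathcal F$-hypercyclic.
   Context: $\mathbb N$ denotes the nonnegative integers. A Furstenberg family is a nonempty collection $\mathcal F\subseteq\mathcal P(\mathbb N)$ with $\emptyset\notin\mathcal F$ which is hereditarily upward. The block family $b\mathcal F$: $S\in b\mathcal F$ iff there is $F\in\mathcal F$ such that for every finite $R\subseteq F$ there is $n\in\mathbb N$ with $R+n\subseteq S$. $N_T(x,U)=\{n\in\mathbb N:T^nx\in U\}$. For a family $\mathcal G$, $T$ is $\mathcal G$-hypercyclic if there is $x$ with $N_T(x,U)\in\mathcal G$ for every nonempty open $U$; hypercyclic means having a vector with dense orbit. $T$ has the $\mathscr P_{\mathcal F}$ property if for every nonempty open $U\subseteq X$ there is $x\in X$ with $N_T(x,U)\in\mathcal F$. *)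

From HB Require Import structures.
From mathcomp Require Import all_boot all_order all_algebra.
From mathcomp Require Import all_classical all_reals all_analysis.
Set Implicit Arguments. Unset Strict Implicit. Unset Printing Implicit Defensive.
Import Order.TTheory GRing.Theory Num.Theory.
Local Open Scope classical_set_scope.

Definition furstenberg_family (F : set (set nat)) : Prop :=
  F !=set0 /\ ~ F set0 /\ (forall A B : set nat, F A -> A `<=` B -> F B).

Definition block_family (F : set (set nat)) : set (set nat) :=
  fun S => exists2 F0, F F0 &
    forall R : set nat, finite_set R -> R `<=` F0 ->
      exists n : nat, [set (r + n)%N | r in R] `<=` S.

Definition return_set (X : Type) (T : X -> X) (x : X) (U : set X) : set nat :=
  [set n | U (iter n T x)].

Definition hypercyclic (X : topologicalType) (T : X -> X) : Prop :=
  exists x : X, dense (range (fun n : nat => iter n T x)).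

Definition G_hypercyclic (X : topologicalType) (G : set (set nat)) (T : X -> X) : Prop :=
  exists x : X, forall U : set X, open U -> U !=set0 -> G (return_set T x U).

Definition P_property (X : topologicalType) (F : set (set nat)) (T : X -> X) : Prop :=
  forall U : set X, open U -> U !=set0 -> exists x : X, F (return_set T x U).

From HB Require Import structures.
From mathcomp Require Import all_boot all_order all_algebra.
From mathcomp Require Import all_classical all_reals all_analysis.
Set Implicit Arguments. Unset Strict Implicit.
Local Open Scope classical_set_scope.

(* Let x have a dense orbit and let N(y, U) be the return set supplied by the
   P_F property.  For a finite R inside N(y, U), continuity of the finitely
   many iterates T^r (r in R) gives an open neighbourhood V of y all of whose
   points z satisfy R ⊆ N(z, U).  The orbit of x enters V at some time n, and
   then R + n ⊆ N(x, U).  So N(y, U) witnesses N(x, U) ∈ bF. *)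

Lemma continuous_iter (X : topologicalType) (f : X -> X) (n : nat) :
  continuous f -> continuous (iter n f).
Proof.
move=> cf; elim: n => [|n IHn] x /=; first exact: cvg_id.
exact: (continuous_comp (IHn x) (cf _)).
Qed.

Lemma near_return_set_finite (X : topologicalType) (f : X -> X) (U : set X)
    (R : set nat) (y : X) :
  continuous f -> open U -> finite_set R -> R `<=` return_set f y U ->
  \forall z \near y, R `<=` return_set f z U.
Proof.
move=> cf oU /finite_fsetP[D ->] DyU.
apply: filterS (filter_bigI (D := D) (f := fun r => iter r f @^-1` U) _ _).
  by move=> z DzU r Dr; exact: (DzU r Dr).
move=> r Dr; apply: open_nbhs_nbhs; split; last exact: DyU.
by apply: open_comp => // z _; exact: continuous_iter.
Qed.

Lemma return_set_iter (X : Type) (f : X -> X) (x : X) (U : set X) (n r : nat) :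
  return_set f (iter n f x) U r = return_set f x U (r + n).
Proof. by rewrite /return_set /= iterD. Qed.

Lemma dense_orbit_return_set_shift (X : topologicalType) (f : X -> X)
    (x y : X) (U : set X) (R : set nat) :
  continuous f -> dense (range (fun n => iter n f x)) -> open U -> finite_set R ->
  R `<=` return_set f y U ->
  exists n : nat, [set (r + n)%N | r in R] `<=` return_set f x U.
Proof.
move=> cf dx oU fR RyU.
have : nbhs y [set z | R `<=` return_set f z U].
  exact: near_return_set_finite.
rewrite nbhsE => -[V [oV Vy] VU].
have [z [Vz [n _ nxz]]] := dx V (ex_intro _ y Vy) oV.
by exists n => _ [r Rr <-]; rewrite -return_set_iter nxz; exact: VU.
Qed.

Lemma block_family_return_set (X : topologicalType) (F : set (set nat))
    (f : X -> X) (x y : X) (U : set X) :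
  continuous f -> dense (range (fun n => iter n f x)) -> open U ->
  F (return_set f y U) -> block_family F (return_set f x U).
Proof.
move=> cf dx oU FyU; exists (return_set f y U) => // R fR RyU.
exact: dense_orbit_return_set_shift cf dx oU fR RyU.
Qed.

Theorem mainTheorem5 (K : numFieldType) (X : topologicalLmodType K)
  (T : {linear X -> X}) (F : set (set nat)) :
  continuous T -> furstenberg_family F ->
  hypercyclic T -> P_property F T -> G_hypercyclic (block_family F) T.
Proof.
move=> cT _ [x dx] PF; exists x => U oU U0.
have [y FyU] := PF U oU U0.
exact: (block_family_return_set cT dx oU FyU).
Qed.
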